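(* For each $n\geq 2$ there is a domain $D$ in $\mathbb{R}^n$ such that $\mathbb{R}^n\setminus D$ contains at least two points and there exists $z\in D$ with $$\lambda''_D(z)<\lambda'_D(z)<\lambda_D(z).$$
   Context: Write $d(z,\partial D)=\inf\{|z-a|:a\in\partial D\}$ and $Q(z;a,b)=|z-a|\big(1+\big|\log\frac{|a-b|}{|z-a|}\big|\big)$ (equal to $+\infty$ when $a=b$). For a domain $D\subset\mathbb{R}^n$ whose complement contains at least two points and $z\in D$ define $1/\lambda_D(z)=\inf\{Q(z;a,b): a,b\in\mathbb{R}^n\setminus D\}$, $1/\lambda'_D(z)=\inf\{Q(z;a,b): a,b\in\partial D\}$, $1/\lambda''_D(z)=\inf\{Q(z;a,b): a,b\in\partial D,\ |z-a|=d(z,\partial D)\}$. *)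

(* R^n is modelled as 'rV[R]_n with its product
   topology (= Euclidean topology); distances use the Euclidean norm. *)
From HB Require Import structures.
From mathcomp Require Import all_boot all_order all_algebra.
From mathcomp Require Import all_classical all_reals all_analysis.
Set Implicit Arguments. Unset Strict Implicit. Unset Printing Implicit Defensive.
Import Order.TTheory GRing.Theory Num.Theory numFieldNormedType.Exports.
Local Open Scope classical_set_scope.
Local Open Scope ring_scope.

Section Defs.
Variables (R : realType) (n : nat).
Local Notation V := 'rV[R]_n.

Definition edist (x y : V) : R := Num.sqrt (\sum_(i < n) (x ord0 i - y ord0 i) ^+ 2).

Definition bdry (D : set V) : set V := closure D `\` interior D.

Definition domain (D : set V) : Prop := [/\ D !=set0, open D & connected D].

Definition dist_bdry (D : set V) (z : V) : R :=
  fine (ereal_inf [set ((edist z a)%:E) | a in bdry D]).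

Definition Qf (z a b : V) : \bar R :=
  if a == b then +oo%E
  else (edist z a * (1 + `| ln (edist a b / edist z a) |))%:E.

Definition lam (D : set V) (z : V) : R :=
  (fine (ereal_inf [set Qf z a b | a in ~` D & b in ~` D]))^-1.

Definition lam' (D : set V) (z : V) : R :=
  (fine (ereal_inf [set Qf z a b | a in bdry D & b in bdry D]))^-1.

Definition lam'' (D : set V) (z : V) : R :=
  (fine (ereal_inf [set Qf z a b | a in [set a | bdry D a /\ edist z a = dist_bdry D z]
                                  & b in bdry D]))^-1.
End Defs.

From Pilot Require Import Defs.
From HB Require Import structures.
From mathcomp Require Import all_boot all_order all_algebra.
From mathcomp Require Import all_classical all_reals all_analysis.
From mathcomp Require Import ring lra.
Set Implicit Arguments. Unset Strict Implicit. Unset Printing Implicit Defensive.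
Import Order.TTheory GRing.Theory Num.Theory numFieldNormedType.Exports.
Local Open Scope classical_set_scope.
Local Open Scope ring_scope.

(* Take for D the complement in R^n of the closed ball of radius 1/5 about e_0 and of
   the point 2e_0, and z = 0.  With r = |z - a| and s = |a - b|, the bound
   ln x >= 1 - 1/x gives Q = r (1 + |ln (s/r)|) >= max (r, 2r - s, 2r - r^2/s).
   The complement pair (e_0, 2e_0) has Q = 1, and Q >= 4/5 on the complement, so
   lambda >= 1.  A boundary point lies on the sphere or is 2e_0: two sphere points are
   within 2/5 of each other, and a sphere point a paired with 2e_0 satisfies
   r^2 + s^2 = 52/25 (Apollonius), which forces Q >= 1.01; yet the pair
   (e_0 + e_1/5, 2e_0) has Q = sqrt 26 / 5 < 1.05.  The nearest boundary point is
   4/5 e_0, and every pair starting there has Q >= 16/15.  Hence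
   lambda'' <= 20/21 < lambda' <= 100/101 < 1 <= lambda. *)

(* A bare [edist] would denote the extended distance of MathComp-Analysis. *)
Local Notation edist := Defs.edist.

Lemma cauchy_schwarz_sum (F : realFieldType) (I : finType) (a b : I -> F) :
  (\sum_i a i * b i) ^+ 2 <= (\sum_i a i ^+ 2) * (\sum_i b i ^+ 2).
Proof.
set A := \sum_i a i ^+ 2; set B := \sum_i b i ^+ 2; set C := \sum_i a i * b i.
have A_ge0 : 0 <= A by rewrite sumr_ge0 // => i _; rewrite sqr_ge0.
have key : 0 <= A * (A * B - C ^+ 2).
  have -> : A * (A * B - C ^+ 2) = \sum_i (A * b i - C * a i) ^+ 2.
    rewrite (eq_bigr (fun i => A ^+ 2 * b i ^+ 2 - 2 * A * C * (a i * b i)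
                               + C ^+ 2 * a i ^+ 2)) => [|i _]; last by ring.
    by rewrite big_split sumrB /= -!mulr_sumr -/A -/B -/C; ring.
  by rewrite sumr_ge0 // => i _; rewrite sqr_ge0.
have [A_gt0|A_le0] := ltrP 0 A; first by rewrite -subr_ge0 -(pmulr_rge0 _ A_gt0).
have A0 : A = 0 by apply/eqP; rewrite eq_le A_le0 A_ge0.
have a0 i : a i = 0.
  apply/eqP; rewrite -sqrf_eq0; apply/eqP.
  by apply: (psumr_eq0P _ A0) => // j _; rewrite sqr_ge0.
by rewrite /C big1 ?A0 ?expr0n ?mul0r // => i _; rewrite a0 mul0r.
Qed.

Lemma sqrtr_sqr_eq (R : rcfType) (r s : R) : 0 <= r -> s = r ^+ 2 -> Num.sqrt s = r.
Proof. by move=> r_ge0 ->; rewrite sqrtr_sqr ger0_norm. Qed.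

Lemma sqrtr_gt (R : rcfType) (r s : R) : 0 <= r -> r ^+ 2 < s -> r < Num.sqrt s.
Proof.
move=> r_ge0 lt_r2s; rewrite -(ger0_norm r_ge0) -sqrtr_sqr ltr_sqrt //.
exact: le_lt_trans (sqr_ge0 r) lt_r2s.
Qed.

Lemma sqrtr_lt (R : rcfType) (r s : R) : 0 < r -> s < r ^+ 2 -> Num.sqrt s < r.
Proof.
move=> r_gt0 lt_sr2; rewrite -(ger0_norm (ltW r_gt0)) -sqrtr_sqr ltr_sqrt //.
by rewrite exprn_gt0.
Qed.

Lemma mulss_norm1 (R : realDomainType) (s : R) : `|s| = 1 -> s * s = 1.
Proof. by move=> s1; rewrite -expr2 -real_normK ?num_real // s1 expr1n. Qed.

Section EuclideanDistance.
Variables (R : realType) (n : nat).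
Implicit Types x y z m a : 'rV[R]_n.

Lemma edist_sqr x y : edist x y ^+ 2 = \sum_i (x ord0 i - y ord0 i) ^+ 2.
Proof. by rewrite sqr_sqrtr // sumr_ge0 // => i _; rewrite sqr_ge0. Qed.

Lemma edist_ge0 x y : 0 <= edist x y.
Proof. exact: sqrtr_ge0. Qed.

Lemma edistC x y : edist x y = edist y x.
Proof. by rewrite /Defs.edist; under eq_bigr do rewrite -sqrrN opprB. Qed.

Lemma edistxx x : edist x x = 0.
Proof. by rewrite /Defs.edist big1 ?sqrtr0 // => i _; rewrite subrr expr0n. Qed.

Lemma edist_gt0 x y : x <> y -> 0 < edist x y.
Proof.
move=> xy; rewrite sqrtr_gt0 lt_def sumr_ge0 ?andbT => [|i _]; last by rewrite sqr_ge0.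
apply: contra_notN xy => /eqP sum0; apply/rowP => i; apply/eqP.
rewrite -subr_eq0 -sqrf_eq0; apply/eqP.
by apply: (psumr_eq0P _ sum0) => // j _; rewrite sqr_ge0.
Qed.

Lemma ler_coord_edist x y i : `|x ord0 i - y ord0 i| <= edist x y.
Proof.
rewrite -sqrtr_sqr ler_wsqrtr // (bigD1 i) //= lerDl.
by rewrite sumr_ge0 // => j _; rewrite sqr_ge0.
Qed.

Lemma edist_triangle x y z : edist x z <= edist x y + edist y z.
Proof.
set u := fun i => x ord0 i - y ord0 i; set v := fun i => y ord0 i - z ord0 i.
have exy := edist_ge0 x y; have eyz := edist_ge0 y z.
have cross : \sum_i u i * v i <= edist x y * edist y z.
  rewrite (le_trans (ler_norm _)) // -ler_sqr ?nnegrE ?mulr_ge0 //.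
  by rewrite real_normK ?num_real // exprMn !edist_sqr cauchy_schwarz_sum.
rewrite -ler_sqr ?nnegrE ?addr_ge0 ?edist_ge0 //.
have -> : edist x z ^+ 2 = edist x y ^+ 2 + 2 * \sum_i u i * v i + edist y z ^+ 2.
  rewrite !edist_sqr mulr_sumr -!big_split /=.
  by apply: eq_bigr => i _; rewrite /u /v; ring.
nra.
Qed.

Lemma continuous_edist y : continuous (fun x => edist x y).
Proof.
move=> x; apply: continuous_comp; last exact: sqrt_continuous.
apply: (continuous_big add_continuous) => {x} i _ x.
apply: (@continuous_comp _ _ _ (fun x : 'rV[R]_n => x ord0 i - y ord0 i) (fun r => r ^+ 2)).
  by apply: continuousB; [exact: coord_continuous | exact: cst_continuous].
exact: exprn_continuous.
Qed.

Lemma apollonius x y m a : x + y = 2 *: m ->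
  edist a x ^+ 2 + edist a y ^+ 2 = 2 * edist a m ^+ 2 + 2 * edist m x ^+ 2.
Proof.
move=> mid; rewrite !edist_sqr !mulr_sumr -!big_split /=; apply: eq_bigr => i _.
have := congr1 (fun w : 'rV[R]_n => w ord0 i) mid; rewrite /= !mxE => mid_i.
have -> : y ord0 i = 2 * m ord0 i - x ord0 i by rewrite -mid_i; ring.
ring.
Qed.

End EuclideanDistance.

Section Segments.
Variables (R : realType) (V : normedModType R).
Implicit Types (A : set V) (p v : V).

Let continuous_ray p v : continuous (fun t : R => p + t *: v).
Proof.
move=> t; apply: (@continuousD _ _ _ (fun=> p) (fun t : R => t *: v)).
  exact: cst_continuous.
exact: scalel_continuous.
Qed.

Lemma closure_ray A p v : (forall t : R, 0 < t -> A (p + t *: v)) -> closure A p.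
Proof.
move=> Aray; set f := fun t : R => p + t *: v.
have cl : closed (f @^-1` closure A).
  by apply: preimage_closed; [move=> t _; exact: continuous_ray | exact: closed_closure].
have ray_sub : [set t : R | 0 < t] `<=` f @^-1` closure A.
  by move=> t /Aray /subset_closure.
have closure0 : closure [set t : R | 0 < t] 0.
  by move: (closure_gt (0 : R)) => /(congr1 (@^~ 0)) /= ->.
have := closureS ray_sub closure0; rewrite -(closure_id _).1 //.
by rewrite /f /= scale0r addr0.
Qed.

Lemma segment_connected_component A p v :
  (forall t : R, 0 <= t <= 1 -> A (p + t *: v)) -> connected_component A p (p + v).
Proof.
move=> Aseg; set f := fun t : R => p + t *: v.
have f01 : f @` `[0, 1] `<=` connected_component A p.
  apply: connected_component_max.
  - by exists 0; [rewrite /= in_itv /= lexx ler01 | rewrite /f scale0r addr0].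
  - by move=> _ [t + <-]; rewrite /= in_itv => /Aseg.
  apply: connected_continuous_connected; first exact: segment_connected.
  exact/continuous_subspaceT/continuous_ray.
by apply: f01; exists 1; [rewrite /= in_itv /= lexx ler01 | rewrite /f scale1r].
Qed.

End Segments.

Section LogDistance.
Variable R : realType.
Implicit Types r s x : R.

Definition qdist r s := r * (1 + `|ln (s / r)|).

Lemma ln_ge_subV x : 0 < x -> 1 - x^-1 <= ln x.
Proof.
move=> x_gt0; have : ln x^-1 <= x^-1 - 1.
  have := @le_ln1Dx R (x^-1 - 1); rewrite addrCA subrr addr0; apply.
  have : 0 < x^-1 by rewrite invr_gt0.
  lra.
rewrite lnV ?posrE //; lra.
Qed.

Lemma qdist_ge r s : 0 <= r -> r <= qdist r s.
Proof. by move=> r_ge0; rewrite /qdist ler_peMr // lerDl. Qed.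

Lemma qdistxx r : qdist r r = r.
Proof.
have [->|r0] := eqVneq r 0; first by rewrite /qdist mul0r.
by rewrite /qdist divff // ln1 normr0 addr0 mulr1.
Qed.

Lemma qdist_ge_subl r s : 0 < r -> 0 < s -> 2 * r - s <= qdist r s.
Proof.
move=> r_gt0 s_gt0; have sr_gt0 : 0 < s / r by rewrite divr_gt0.
have := @ln_ge_subV ((s / r)^-1); rewrite invrK lnV ?posrE // invr_gt0.
move=> /(_ sr_gt0) ln_ge.
have -> : 2 * r - s = r * (1 + (1 - s / r)) by field; rewrite gt_eqF.
by rewrite ler_pM2l // lerD2l (le_trans ln_ge) // -normrN ler_norm.
Qed.

Lemma qdist_ge_subr r s : 0 < r -> 0 < s -> 2 * r - r ^+ 2 / s <= qdist r s.
Proof.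
move=> r_gt0 s_gt0; have ln_ge := @ln_ge_subV (s / r) (divr_gt0 s_gt0 r_gt0).
have -> : 2 * r - r ^+ 2 / s = r * (1 + (1 - (s / r)^-1)).
  by rewrite invf_div; field; rewrite gt_eqF.
by rewrite ler_pM2l // lerD2l (le_trans ln_ge) // ler_norm.
Qed.

Lemma QfE n (z a b : 'rV[R]_n) : a <> b -> Qf z a b = (qdist (edist z a) (edist a b))%:E.
Proof. by rewrite /Qf => /eqP/negbTE ->. Qed.

Lemma Qf_ge_dist n (z a b : 'rV[R]_n) : ((edist z a)%:E <= Qf z a b)%E.
Proof.
rewrite /Qf; case: eqP => _; first exact: leey.
by rewrite lee_fin qdist_ge ?edist_ge0.
Qed.

End LogDistance.

Section ExtendedInfimum.
Variable R : realType.
Implicit Types (S : set (\bar R)) (l u : R).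

Lemma fine_ereal_inf_bounds S l u :
  lbound S l%:E -> S u%:E -> l <= fine (ereal_inf S) <= u.
Proof.
move=> /le_ereal_inf_tmp Sl /ereal_inf_lbound Su.
by case: (ereal_inf S) Sl Su => [x| |] //=; rewrite ?lee_fin => -> ->.
Qed.

Lemma inv_fine_ereal_inf_le S l :
  0 < l -> lbound S l%:E -> (fine (ereal_inf S))^-1 <= l^-1.
Proof.
move=> l_gt0 /le_ereal_inf_tmp; case: (ereal_inf S) => [x| |] //=.
  by rewrite lee_fin => lx; rewrite lef_pV2 ?posrE // (lt_le_trans l_gt0 lx).
by move=> _; rewrite invr0 invr_ge0 ltW.
Qed.

End ExtendedInfimum.

Lemma bdry_open (R : realType) n (A : set 'rV[R]_n) : open A -> bdry A = closure A `\` A.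
Proof. by rewrite /bdry => /interior_id ->. Qed.

Section PuncturedExterior.
Variables (R : realType) (k : nat).
Local Notation V := 'rV[R]_k.+2.
Local Notation i1 := (@Ordinal k.+2 1 isT).
Implicit Types (a b w x y : V) (c r s t : R).

Definition pt (x y : R) : V := \row_j (if j == ord0 then x else if j == i1 then y else 0).

Local Notation origin := (pt 0 0).
Local Notation centre := (pt 1 0).
Local Notation puncture := (pt 2 0).
Local Notation rho := (5^-1 : R).

Definition Omega : set V := [set x | rho < edist x centre /\ x <> puncture].

Lemma pt_coord0 (x y : R) : pt x y ord0 ord0 = x.
Proof. by rewrite mxE eqxx. Qed.

Lemma pt_coord1 (x y : R) : pt x y ord0 i1 = y.
Proof. by rewrite mxE. Qed.

Lemma pt_inj (x y x' y' : R) : pt x y = pt x' y' -> x = x' /\ y = y'.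
Proof.
move=> e; split.
  by have := congr1 (fun w : V => w ord0 ord0) e; rewrite /= !pt_coord0.
by have := congr1 (fun w : V => w ord0 i1) e; rewrite /= !pt_coord1.
Qed.

Lemma pt00 : origin = 0.
Proof. by apply/rowP => j; rewrite !mxE; case: ifP => // _; case: ifP. Qed.

Lemma pt_add (x y x' y' : R) : pt x y + pt x' y' = pt (x + x') (y + y').
Proof.
by apply/rowP => j; rewrite !mxE; case: ifP => _ //; case: ifP => _ //; rewrite addr0.
Qed.

Lemma scale_pt (x y : R) t : t *: pt x y = pt (t * x) (t * y).
Proof.
by apply/rowP => j; rewrite !mxE; case: ifP => _ //; case: ifP => _ //; rewrite mulr0.
Qed.

Lemma edist_pt (x y x' y' : R) :
  edist (pt x y) (pt x' y') = Num.sqrt ((x - x') ^+ 2 + (y - y') ^+ 2).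
Proof.
rewrite /Defs.edist (bigD1 ord0) // (bigD1 i1) //= big1 ?addr0 ?pt_coord0 ?pt_coord1 ?addrA //.
by move=> j /andP[j1 j0]; rewrite !mxE (negbTE j0) (negbTE j1) subrr expr0n.
Qed.

Lemma Omega_pt (x y : R) :
  rho ^+ 2 < (x - 1) ^+ 2 + y ^+ 2 -> x != 2 \/ y != 0 -> Omega (pt x y).
Proof.
move=> far not_puncture; split; first by rewrite edist_pt subr0 sqrtr_gt.
by move=> /pt_inj[x2 y0]; case: not_puncture => /eqP.
Qed.

Lemma centre_neq_puncture : centre <> puncture.
Proof. by move=> /pt_inj[]; lra. Qed.

Lemma centre_notin_Omega : ~ Omega centre.
Proof. by case=> + _; rewrite edistxx; lra. Qed.

Lemma puncture_notin_Omega : ~ Omega puncture.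
Proof. by case. Qed.

Lemma notin_Omega a : ~ Omega a -> edist a centre <= rho \/ a = puncture.
Proof.
move=> a_out; have [->|a_neq] := eqVneq a puncture; first by right.
by left; rewrite leNgt; apply/negP => a_far; apply: a_out; split => // /eqP; exact/negP.
Qed.

Lemma open_Omega : open Omega.
Proof.
have -> : Omega = (fun x => edist x centre) @^-1` [set r | rho < r] `&` ~` [set puncture].
  by apply/seteqP; split => x [].
apply: openI.
  by apply: open_comp; [move=> x _; exact: continuous_edist | exact: open_gt].
by rewrite openC; apply/accessible_closed_set1/hausdorff_accessible/norm_hausdorff.
Qed.

Lemma bdry_Omega a : bdry Omega a -> edist a centre = rho \/ a = puncture.
Proof.
rewrite (bdry_open open_Omega) => -[a_cl /notin_Omega[a_in|->]]; last by right.
left; apply/eqP; rewrite eq_le a_in leNgt; apply/negP => a_lt.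
have a_nbhs : nbhs a [set y | edist y centre < rho].
  apply: open_nbhs_nbhs; split => //.
  apply: (@open_comp _ _ (fun y => edist y centre) [set r | r < rho]) => [x _|].
    exact: continuous_edist.
  exact: open_lt.
have [y [[y_gt _] y_lt]] := a_cl _ a_nbhs.
by move: y_lt; rewrite /= ltNge (ltW y_gt).
Qed.

Lemma bdry_Omega_ray a w :
  ~ Omega a -> (forall t, 0 < t -> Omega (a + t *: w)) -> bdry Omega a.
Proof.
by move=> a_out ray; rewrite (bdry_open open_Omega); split => //; exact: closure_ray ray.
Qed.

Lemma bdry_puncture : bdry Omega puncture.
Proof.
apply: (bdry_Omega_ray (w := pt 0 1)) => [|t t_gt0]; first exact: puncture_notin_Omega.
rewrite scale_pt pt_add; apply: Omega_pt; last by right; rewrite add0r mulr1 gt_eqF.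
by rewrite mulr0 addr0 mulr1; nra.
Qed.

Lemma bdry_sphere_top : bdry Omega (pt 1 rho).
Proof.
apply: (bdry_Omega_ray (w := pt 0 1)) => [[]|t t_gt0].
  by rewrite edist_pt subrr subr0 (@sqrtr_sqr_eq _ rho); [move=> + _; lra | lra | ring].
rewrite scale_pt pt_add; apply: Omega_pt; last by left; rewrite mulr0 addr0; apply/eqP; lra.
by rewrite mulr0 addr0 subrr mulr1; nra.
Qed.

Lemma bdry_sphere_near : bdry Omega (pt (4/5) 0).
Proof.
apply: (bdry_Omega_ray (w := pt (-1) 0)) => [[]|t t_gt0].
  by rewrite edist_pt subrr (@sqrtr_sqr_eq _ rho); [move=> + _; lra | lra | field].
rewrite scale_pt pt_add; apply: Omega_pt; last by left; apply/eqP; lra.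
by rewrite mulr0 addr0; nra.
Qed.

Lemma Omega_coord1 w : 1 <= `|w ord0 i1| -> Omega w.
Proof.
move=> w1; split.
  apply: lt_le_trans (ler_coord_edist w centre i1); rewrite pt_coord1 subr0; lra.
by move=> w_p; move: w1; rewrite w_p pt_coord1 normr0; lra.
Qed.

Lemma Omega_push x c : Omega x -> 0 <= c * x ord0 i1 -> Omega (x + pt 0 c).
Proof.
move=> [x_far x_np] cx; split.
  have : edist x centre ^+ 2 <= edist (x + pt 0 c) centre ^+ 2.
    rewrite !edist_sqr; apply: ler_sum => j _; rewrite !mxE.
    case: ifP => _; first by rewrite addr0.
    case: ifP => [/eqP -> | _]; last by rewrite addr0.
    by rewrite !subr0; nra.
  have := edist_ge0 x centre; have := edist_ge0 (x + pt 0 c) centre; nra.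
move=> x_p; have := congr1 (fun w : V => w ord0 i1) x_p; rewrite /= !mxE /= => x1c.
have c0 : c = 0 by apply/eqP; rewrite -sqrf_eq0 eq_le sqr_ge0 andbT; nra.
by apply: x_np; rewrite -x_p c0 pt00 addr0.
Qed.

Lemma Omega_component_axis s : `|s| = 1 -> connected_component Omega origin (pt 0 s).
Proof.
move=> s1; rewrite -[pt 0 s]add0r -pt00.
apply: segment_connected_component => t /andP[t_ge0 t_le1].
rewrite scale_pt pt_add; apply: Omega_pt; last by left; rewrite mulr0 addr0; apply/eqP; lra.
by rewrite !mulr0 !add0r; nra.
Qed.

Lemma Omega_halfspace_component y s :
  `|s| = 1 -> 1 <= s * y ord0 i1 -> connected_component Omega y (pt 0 s).
Proof.
move=> s1 sy; rewrite -[pt 0 s](addrNK y) addrC.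
apply: segment_connected_component => t /andP[t_ge0 t_le1]; apply: Omega_coord1.
have le_norm r : s * r <= `|r| by rewrite -[`|r|]mul1r -s1 -normrM ler_norm.
apply: le_trans (le_norm _); rewrite !mxE /=.
have := mulss_norm1 s1; nra.
Qed.

Lemma Omega_push_component x c :
  Omega x -> 0 <= c * x ord0 i1 -> connected_component Omega x (x + pt 0 c).
Proof.
move=> x_in cx; apply: segment_connected_component => t /andP[t_ge0 _].
rewrite scale_pt mulr0.
by apply: Omega_push; rewrite // -mulrA mulr_ge0.
Qed.

Lemma connected_Omega : connected Omega.
Proof.
suff -> : Omega = connected_component Omega origin by exact: component_connected.
apply/seteqP; split => [x x_in|]; last exact: connected_component_sub.
have [s s1 sx] : exists2 s : R, `|s| = 1 & s * x ord0 i1 = `|x ord0 i1|.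
  have [x1_ge0|x1_lt0] := leP 0 (x ord0 i1).
    by exists 1; rewrite ?normr1 ?mul1r ?ger0_norm.
  by exists (-1); rewrite ?normrN ?normr1 // mulN1r ltr0_norm.
apply: connected_component_trans (Omega_component_axis s1) _.
have x_push := Omega_push_component (c := s) x_in.
apply/connected_component_sym/(connected_component_trans (x_push _)); first by rewrite sx.
apply: Omega_halfspace_component => //.
by rewrite !mxE /= mulrDr sx mulss_norm1 // lerDr.
Qed.

Lemma origin_in_Omega : Omega origin.
Proof. by apply: Omega_pt; [nra | left; apply/eqP; lra]. Qed.

Lemma domain_Omega : domain Omega.
Proof.
by split; [exists origin; exact: origin_in_Omega | exact: open_Omega | exact: connected_Omega].
Qed.

Lemma edist_origin_centre : edist origin centre = 1.
Proof. by rewrite edist_pt; apply: sqrtr_sqr_eq; [lra | ring]. Qed.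

Lemma edist_centre_puncture : edist centre puncture = 1.
Proof. by rewrite edist_pt; apply: sqrtr_sqr_eq; [lra | ring]. Qed.

Lemma edist_origin_puncture : edist origin puncture = 2.
Proof. by rewrite edist_pt; apply: sqrtr_sqr_eq; [lra | ring]. Qed.

Lemma edist_origin_ge a : ~ Omega a -> 4/5 <= edist origin a.
Proof.
case/notin_Omega => [a_near|->]; last by rewrite edist_origin_puncture; lra.
have := edist_triangle origin a centre; rewrite edist_origin_centre; lra.
Qed.

Lemma bdry_cases a :
  bdry Omega a -> (edist a centre = rho /\ 4/5 <= edist origin a) \/ a = puncture.
Proof.
move=> a_bd; have a_out : ~ Omega a by rewrite (bdry_open open_Omega) in a_bd; case: a_bd.
by case: (bdry_Omega a_bd) => [a_sph|->]; [left; split; last exact: edist_origin_ge | right].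
Qed.

Lemma parallelogram_puncture a :
  edist origin a ^+ 2 + edist a puncture ^+ 2 = 2 * edist a centre ^+ 2 + 2.
Proof.
rewrite edistC (apollonius (m := centre)); last by rewrite scale_pt pt_add mulr1 mulr0 !add0r.
by rewrite [edist centre origin]edistC edist_origin_centre expr1n mulr1.
Qed.

Lemma qdist_sphere_pair a b :
  edist a centre = rho -> edist b centre = rho -> 4/5 <= edist origin a -> a <> b ->
  6/5 <= qdist (edist origin a) (edist a b).
Proof.
move=> a_sph b_sph r_ge ab.
have : edist a b <= 2/5 by have := edist_triangle a centre b; rewrite edistC in b_sph; lra.
have r_gt0 : 0 < edist origin a by apply: lt_le_trans r_ge; lra.
have := qdist_ge_subl r_gt0 (edist_gt0 ab); lra.
Qed.

Lemma qdist_sphere_puncture r s :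
  4/5 <= r -> 0 < s -> r ^+ 2 + s ^+ 2 = 52/25 -> 101/100 <= qdist r s.
Proof.
move=> r_ge s_gt0 rs.
have r_gt0 : 0 < r by lra.
have [s_le|r_lt] := lerP s r.
  apply: le_trans (qdist_ge _ (ltW r_gt0)).
  have : s ^+ 2 <= r ^+ 2 by rewrite ler_sqr ?nnegrE ?(ltW s_gt0) ?(ltW r_gt0).
  nra.
apply: le_trans (qdist_ge_subr r_gt0 s_gt0).
suff : r ^+ 2 / s <= 2 * r - 101/100 by lra.
rewrite ler_pdivrMr //.
have r2_le : r ^+ 2 <= 26/25 by nra.
have r_le : r <= 51/50 by nra.
have : 0 <= (r - 4/5) * (s - r) by apply: mulr_ge0; lra.
have : 0 <= (51/50 - r) * (s - r) by apply: mulr_ge0; lra.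
nra.
Qed.

Lemma Qf_bdry_ge a b : bdry Omega a -> bdry Omega b -> ((101/100)%:E <= Qf origin a b)%E.
Proof.
have [->|ab] := eqVneq a b; first by rewrite /Qf eqxx leey.
move/eqP in ab; rewrite QfE // lee_fin => /bdry_cases[[a_sph r_ge]|->] b_bd; last first.
  by apply: le_trans (qdist_ge _ (edist_ge0 _ _)); rewrite edist_origin_puncture; lra.
case: (bdry_cases b_bd) => [[b_sph _]|b_p].
  by apply: le_trans (qdist_sphere_pair a_sph b_sph r_ge ab); lra.
rewrite b_p in ab *; apply: qdist_sphere_puncture => //; first exact: edist_gt0.
by rewrite parallelogram_puncture a_sph; field.
Qed.

Lemma Qf_nearest_ge a b : bdry Omega a -> edist origin a = 4/5 -> bdry Omega b ->
  ((21/20)%:E <= Qf origin a b)%E.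
Proof.
have [->|ab] := eqVneq a b; first by rewrite /Qf eqxx leey.
move/eqP in ab; rewrite QfE // lee_fin => /bdry_cases[[a_sph _]|->] r_eq b_bd; last first.
  by move: r_eq; rewrite edist_origin_puncture; lra.
case: (bdry_cases b_bd) => [[b_sph _]|b_p].
  have r_ge : 4/5 <= edist origin a by rewrite r_eq.
  by apply: le_trans (qdist_sphere_pair a_sph b_sph r_ge ab); lra.
rewrite b_p in ab *; rewrite r_eq.
have s_ge : 6/5 <= edist a puncture.
  by have := edist_triangle origin a puncture; rewrite edist_origin_puncture r_eq; lra.
apply: le_trans (qdist_ge_subr _ (edist_gt0 ab)); last lra.
suff : (4/5) ^+ 2 / edist a puncture <= 11/20 by lra.
rewrite ler_pdivrMr; lra.
Qed.

Lemma dist_bdry_origin : dist_bdry Omega origin = 4/5.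
Proof.
have /andP[d_ge d_le] : 4/5 <= dist_bdry Omega origin <= 4/5.
  apply: fine_ereal_inf_bounds => [_ [a a_bd <-]|].
    by case: (bdry_cases a_bd) => [[_ //]|->]; rewrite lee_fin edist_origin_puncture; lra.
  exists (pt (4/5) 0); first exact: bdry_sphere_near.
  by congr EFin; rewrite edist_pt; apply: sqrtr_sqr_eq; [lra | ring].
by apply/eqP; rewrite eq_le d_ge d_le.
Qed.

Lemma lam_ge1 : 1 <= lam Omega origin.
Proof.
have /andP[S_ge S_le] : 4/5 <= fine (ereal_inf
    [set Qf origin a b | a in ~` Omega & b in ~` Omega]) <= 1.
  apply: fine_ereal_inf_bounds => [_ [a a_out [b _ <-]]|].
    by apply: le_trans (Qf_ge_dist origin a b); rewrite lee_fin edist_origin_ge.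
  exists centre; first exact: centre_notin_Omega.
  exists puncture; first exact: puncture_notin_Omega.
  rewrite QfE; last exact: centre_neq_puncture.
  by rewrite edist_origin_centre edist_centre_puncture qdistxx.
rewrite /lam -invr1 lef_pV2 ?posrE //; lra.
Qed.

Lemma lam'_bounds : 20/21 < lam' Omega origin <= 100/101.
Proof.
set a' := pt 1 rho.
have a'_lt : edist origin a' < 21/20 by rewrite edist_pt; apply: sqrtr_lt; lra.
have /andP[S_ge S_le] : 101/100 <= fine (ereal_inf
    [set Qf origin a b | a in bdry Omega & b in bdry Omega]) <= edist origin a'.
  apply: fine_ereal_inf_bounds => [_ [a a_bd [b b_bd <-]]|]; first exact: Qf_bdry_ge.
  exists a'; first exact: bdry_sphere_top.
  exists puncture; first exact: bdry_puncture.
  rewrite QfE => [|/pt_inj[]]; last lra.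
  have -> : edist a' puncture = edist origin a' by rewrite !edist_pt; congr Num.sqrt; ring.
  by rewrite qdistxx.
rewrite /lam' -[20/21](invf_div 21) -[100/101](invf_div 101).
by rewrite ltf_pV2 ?lef_pV2 ?posrE; lra.
Qed.

Lemma lam''_le : lam'' Omega origin <= 20/21.
Proof.
rewrite /lam'' -[20/21](invf_div 21) dist_bdry_origin.
apply: inv_fine_ereal_inf_le => [|_ [a [a_bd a_near] [b b_bd <-]]]; first lra.
exact: Qf_nearest_ge.
Qed.

Lemma lam_chain : lam'' Omega origin < lam' Omega origin < lam Omega origin.
Proof.
have l''_le := lam''_le; have l_ge := lam_ge1; have /andP[l'_gt l'_le] := lam'_bounds.
by apply/andP; split; lra.
Qed.

End PuncturedExterior.

Theorem lemma3 (R : realType) (n : nat) (hn : (2 <= n)%N) :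
  exists D : set 'rV[R]_n,
    domain D /\
    (exists a b : 'rV[R]_n, ~ D a /\ ~ D b /\ a <> b) /\
    (exists z : 'rV[R]_n, D z /\ lam'' D z < lam' D z /\ lam' D z < lam D z).
Proof.
case: n hn => [|[|k]] // _.
exists (@Omega R k); split; first exact: domain_Omega.
split; first by exists (pt k 1 0), (pt k 2 0); split; [|split];
  [exact: centre_notin_Omega | exact: puncture_notin_Omega | exact: centre_neq_puncture].
exists (pt k 0 0); split; first exact: origin_in_Omega.
by have /andP[? ?] := @lam_chain R k.
Qed.
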